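(* Let $\mathbf{P}$ be the transition matrix of a Markov chain on a finite state space $V$, let $L\ge0$, $\ell=2^L$, $w_0\in V$, and let $\rho\ge 1$ be an integer. Maintain sequences whose entries are indexed by times in $\{0,1,\dots,\ell\}$. Initially $W_1$ has entry $w_0$ at time $0$ and entry $w_\ell\sim\mathbf{P}^\ell[w_0,\cdot]$ at time $\ell$. At level $i=1,\dots,L$, with $\delta=\ell/2^{i-1}$, the current sequence $W_i$ has entries at times $0,\delta,2\delta,\dots,\ell_i$ for some $\ell_i\le \ell$; between every pair of consecutive entries $x$ (at time $s$) and $x'$ (at time $s+\delta$) insert, at time $s+\delta/2$, a vertex $y$ drawn (conditionally independently given the past) with probability $\mathbf{P}^{\delta/2}[x,y]\mathbf{P}^{\delta/2}[y,x']/\mathbf{P}^{\delta}[x,x']$; then, if the resulting sequence contains at least $\rho$ distinct vertices, delete all entries at times after the first entry at which the $\rho$-th distinct vertex appears. Call the result $W_{i+1}$. Then $W_{L+1}$ has the same distribution as $(X_0,X_1,\dots,X_\tau)$, where $(X_t)$ is the Markov chain with transition matrix $\mathbf{P}$ started at $w_0$ and $\tau$ is the minimum of $\ell$ and the first time $t$ at which $\{X_0,\dots,X_t\}$ contains $\rho$ distinct vertices. *)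

From mathcomp Require Import all_boot all_order all_algebra.
Set Implicit Arguments. Unset Strict Implicit. Unset Printing Implicit Defensive.
Import Order.TTheory GRing.Theory Num.Theory.
Local Open Scope ring_scope.

Section MarkovBridge.
Variables (R : realFieldType) (V : finType) (P : V -> V -> R).

Definition stochastic : Prop :=
  (forall x y, 0 <= P x y) /\ (forall x, \sum_y P x y = 1).

Fixpoint Ppow (k : nat) : V -> V -> R :=
  match k with
  | 0 => fun x y => (x == y)%:R
  | k'.+1 => fun x y => \sum_z Ppow k' x z * P z y
  end.

Definition ndistinct (s : seq V) : nat := size (undup s).

(* first index k such that s_0..s_k contains at least rho distinct vertices
   (= size s if there is none) *)
Definition first_hit (rho : nat) (s : seq V) : nat :=
  find (fun k => (rho <= ndistinct (take k.+1 s))%N) (iota 0 (size s)).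

Definition trunc (rho : nat) (s : seq V) : seq V := take (first_hit rho s).+1 s.

(* interleave: x0 y1 x1 y2 x2 ... ym xm *)
Fixpoint refine (s ys : seq V) : seq V :=
  match s, ys with
  | x :: ((_ :: _) as s'), y :: ys' => x :: y :: refine s' ys'
  | _, _ => s
  end.

Definition bridge (h : nat) (x y x' : V) : R :=
  Ppow h x y * Ppow h y x' / Ppow (2 * h)%N x x'.

Fixpoint bweight (h : nat) (s ys : seq V) : R :=
  match s, ys with
  | x :: ((x' :: _) as s'), y :: ys' => bridge h x y x' * bweight h s' ys'
  | _, _ => 1
  end.

Definition init (L : nat) (w0 : V) (s : seq V) : R :=
  match s with
  | [:: x; w] => (x == w0)%:R * Ppow (2 ^ L)%N w0 w
  | _ => 0
  end.

(* Wdist L rho w0 k = probability mass function of W_{k+1}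
   (entries listed in time order; spacing 2^(L-k)).  Level i = k+1 uses
   delta = 2^(L-k) and half-step h = 2^(L-k-1). *)
Fixpoint Wdist (L rho : nat) (w0 : V) (k : nat) : seq V -> R :=
  match k with
  | 0 => init L w0
  | k'.+1 => fun s =>
      let h := (2 ^ (L - k'.+1))%N in
      \sum_(n < (2 ^ L).+2) \sum_(t : n.-tuple V)
        Wdist L rho w0 k' t *
        \sum_(ys : (n.-1).-tuple V)
          bweight h t ys * (trunc rho (refine t ys) == s)%:R
  end.

Fixpoint pathw (s : seq V) : R :=
  match s with
  | x :: ((x' :: _) as s') => P x x' * pathw s'
  | _ => 1
  end.

Definition tau (L rho : nat) (x : seq V) : nat := minn (2 ^ L) (first_hit rho x).

Definition stopped_dist (L rho : nat) (w0 : V) (s : seq V) : R :=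
  \sum_(x : (2 ^ L).-tuple V)
    pathw (w0 :: x) * (take (tau L rho (w0 :: x)).+1 (w0 :: x) == s)%:R.

End MarkovBridge.

From mathcomp Require Import all_boot all_order all_algebra.
Set Implicit Arguments. Unset Strict Implicit. Unset Printing Implicit Defensive.
Import GRing.Theory Num.Theory.
Local Open Scope ring_scope.

(* Write l = 2^L and, for a path c, Q_d(c) for the product of the d-step
   transition probabilities P^d along c.  By induction on k, W_{k+1} is the
   law of the truncation of (X_0, X_{l/2^k}, ..., X_l), the skeleton of the
   chain at mesh l/2^k, weighted by Q_{l/2^k}.  In the induction step the
   bridge weights turn Q_{2h}(v) into Q_h of the refined path, refining and
   truncating the truncated skeleton gives the same sequence as refining and
   truncating the full skeleton, and the bridge weights of the midpoints that
   are cut away sum to 1 by Chapman-Kolmogorov.  At k = L the mesh is 1,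
   Q_1 is the path probability and the truncation is the stopping at tau. *)

Section SumSeq.
Variables (R : pzRingType) (T : finType).

(* Summation over [n.-tuple T], recast as a recursion that unfolds one entry at
   a time. *)
Fixpoint sumseq (n : nat) (F : seq T -> R) : R :=
  if n is n'.+1 then \sum_x sumseq n' (fun s => F (x :: s)) else F [::].

Lemma eq_sumseq n F G : (forall s, size s = n -> F s = G s) ->
  sumseq n F = sumseq n G.
Proof.
elim: n F G => [|n IHn] F G eqFG /=; first exact: eqFG.
by apply: eq_bigr => x _; apply: IHn => s sz_s; apply: eqFG; rewrite /= sz_s.
Qed.

Lemma mulr_sumseqr n a F : a * sumseq n F = sumseq n (fun s => a * F s).
Proof.
by elim: n F => [|n IHn] F //=; rewrite mulr_sumr; apply: eq_bigr => x _.
Qed.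

Lemma mulr_sumseql n a F : sumseq n F * a = sumseq n (fun s => F s * a).
Proof.
by elim: n F => [|n IHn] F //=; rewrite mulr_suml; apply: eq_bigr => x _.
Qed.

Lemma exchange_big_sumseq n (I : Type) (r : seq I) (Q : pred I)
    (F : I -> seq T -> R) :
  \sum_(i <- r | Q i) sumseq n (F i) =
  sumseq n (fun s => \sum_(i <- r | Q i) F i s).
Proof.
by elim: n F => [|n IHn] F //=; rewrite exchange_big; apply: eq_bigr => x _.
Qed.

Lemma big_tuple_sumseq n (F : seq T -> R) :
  \sum_(t : n.-tuple T) F t = sumseq n F.
Proof.
elim: n F => [|n IHn] F /=.
  by rewrite (big_pred1 [tuple]) // => t; rewrite [t]tuple0 /= eq_refl.
rewrite (reindex (fun p : T * n.-tuple T => cons_tuple p.1 p.2)) /=.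
  rewrite -(pair_big predT predT (fun x (t : n.-tuple T) => F (x :: t))) /=.
  by apply: eq_bigr => x _; apply: IHn.
exists (fun t : n.+1.-tuple T => (thead t, behead_tuple t)).
  by move=> [x t] _; congr (_, _); apply: val_inj.
by move=> [[|x s] sz_s] _; apply: val_inj.
Qed.

Lemma big_tuple_eq (u : seq T) N (G : nat -> seq T -> R) : (size u < N)%N ->
  \sum_(n < N) \sum_(t : n.-tuple T) (u == t)%:R * G n t = G (size u) u.
Proof.
move=> ltuN; rewrite (bigD1 (Ordinal ltuN)) //= [X in _ + X]big1 => [|n ne_n_u].
  rewrite addr0 (bigD1 (@Tuple (size u) T u (eqxx _))) //= eqxx mul1r.
  rewrite big1 ?addr0 // => t ne_t_u.
  have [u_t|] := eqVneq u t; last by rewrite mul0r.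
  by case/eqP: ne_t_u; apply: val_inj.
apply: big1 => t _; have [u_t|] := eqVneq u t; last by rewrite mul0r.
by case/eqP: ne_n_u; apply: val_inj; rewrite /= u_t size_tuple.
Qed.

End SumSeq.

Section RefineTrunc.
Variable V : finType.
Implicit Types (s u v ys zs : seq V) (rho : nat).

Lemma refine_cons2 (x x' y : V) s ys :
  refine (x :: x' :: s) (y :: ys) = x :: y :: refine (x' :: s) ys.
Proof. by []. Qed.

Lemma refine_cons (x : V) s ys : exists r, refine (x :: s) ys = x :: r.
Proof. by case: s => [|? ?]; case: ys => [|? ?]; eexists. Qed.

Lemma take_refine v zs j : size zs = (size v).-1 ->
  take j.*2.-1 (refine v zs) = refine (take j v) (take j.-1 zs).
Proof.
elim: v zs j => [|x [|x' v] IHv] [|z zs] [|[|j]] // [sz_zs].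
rewrite refine_cons2 -[RHS]/(x :: z :: refine (take j.+1 (x' :: v)) (take j zs)).
by rewrite -IHv.
Qed.

Lemma mem_refine v zs : {subset v <= refine v zs}.
Proof.
elim: v zs => [|x [|x' v] IHv] [|z zs] y //.
by rewrite refine_cons2 !inE => /orP[->|/IHv->]; rewrite ?orbT.
Qed.

Lemma ndistinct_subset s u : {subset s <= u} -> (ndistinct s <= ndistinct u)%N.
Proof.
move=> sub_su; apply: uniq_leq_size; first exact: undup_uniq.
by move=> y; rewrite !mem_undup => /sub_su.
Qed.

Lemma trunc_take rho p s : (0 < p)%N -> (rho <= ndistinct (take p s))%N ->
  trunc rho (take p s) = trunc rho s.
Proof.
move=> p_gt0 hit; have [le_s_p|lt_p_s] := leqP (size s) p.
  by rewrite take_oversize.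
rewrite /trunc /first_hit (size_takel (ltnW lt_p_s)).
set a := fun k => (rho <= ndistinct (take k.+1 s))%N.
have has_a : has a (iota 0 p).
  apply/hasP; exists p.-1; first by rewrite mem_iota add0n prednK ?leqnn.
  by rewrite /a prednK.
rewrite -(subnKC (ltnW lt_p_s)) iotaD find_cat has_a (@eq_in_find _ _ a).
  by rewrite take_takel //; move: has_a; rewrite has_find size_iota.
move=> k; rewrite mem_iota => /andP[_ lt_kp].
by rewrite /a take_takel.
Qed.

Lemma trunc_full_or_hit rho s :
  size (trunc rho s) = size s \/ (rho <= ndistinct (trunc rho s))%N.
Proof.
rewrite /trunc /first_hit.
set a := fun k => (rho <= ndistinct (take k.+1 s))%N.
have [has_a|] := boolP (has a (iota 0 (size s))).
  right; have := nth_find 0%N has_a.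
  by rewrite nth_iota //; move: has_a; rewrite has_find size_iota.
rewrite has_find size_iota -leqNgt => le_s_find.
by left; rewrite take_oversize // (leq_trans le_s_find).
Qed.

Lemma trunc_refine_take rho v zs j : size zs = (size v).-1 ->
  (0 < j <= size v)%N -> j = size v \/ (rho <= ndistinct (take j v))%N ->
  trunc rho (refine (take j v) (take j.-1 zs)) = trunc rho (refine v zs).
Proof.
move=> sz_zs /andP[j_gt0 le_jv] [->|hit].
  by rewrite take_size take_oversize // sz_zs.
rewrite -take_refine //; apply: trunc_take; first by rewrite -(prednK j_gt0).
apply: leq_trans hit _; apply: ndistinct_subset => y.
by rewrite take_refine //; apply: mem_refine.
Qed.

(* W_1 is not truncated, so level 0 is special. *)
Definition level_trunc rho k v := if k is 0 then v else trunc rho v.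

Lemma level_truncP rho k v : (0 < size v)%N ->
  let u := level_trunc rho k v in
  [/\ take (size u) v = u, (0 < size u <= size v)%N
    & size u = size v \/ (rho <= ndistinct u)%N].
Proof.
case: k => [|k] v_gt0 /=.
  by rewrite take_size v_gt0 leqnn; split=> //; left.
split; last exact: trunc_full_or_hit.
  by rewrite /trunc size_take_min take_min take_size.
by rewrite /trunc size_take_min leq_min v_gt0 geq_minr.
Qed.

Lemma level_trunc_tau L rho (w0 : V) c :
  (0 < L)%N || (1 < rho)%N -> size c = (2 ^ L)%N ->
  level_trunc rho L (w0 :: c) = take (tau L rho (w0 :: c)).+1 (w0 :: c).
Proof.
case: L => [|L] L_rho sz_c.
  case: c sz_c => [|x [|y c]] // _; move: L_rho => /= L_rho.
  have no_hit : (rho <= ndistinct [:: w0])%N = false by rewrite leqNgt L_rho.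
  by rewrite /tau /first_hit /= no_hit; case: ifP.
rewrite /tau /trunc -minnSS take_min [take (2 ^ L.+1).+1 _]take_oversize //.
by rewrite size_take_min (leq_trans (geq_minr _ _)) //= sz_c.
Qed.

End RefineTrunc.

Lemma sumseq_refine (R : pzRingType) (V : finType) m (x : V) (F : seq V -> R) :
  sumseq m.*2 (fun c => F (x :: c)) =
  sumseq m (fun c => sumseq m (fun zs => F (refine (x :: c) zs))).
Proof.
elim: m x F => [//|m IHm] x F.
rewrite doubleS [LHS]/= (eq_bigr _ (fun z _ => eq_bigr _ (fun y _ =>
  IHm y (fun c => F (x :: z :: c))))) exchange_big /=.
by apply: eq_bigr => y _; rewrite exchange_big_sumseq.
Qed.

Section Skeleton.
Variables (R : realFieldType) (V : finType) (P : V -> V -> R).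
Hypothesis P_ge0 : forall x y, 0 <= P x y.
Implicit Types (s v ys zs : seq V) (rho : nat).

Lemma Ppow_ge0 k x y : 0 <= Ppow P k x y.
Proof.
elim: k x y => [|k IHk] x y /=; first exact: ler0n.
by apply: sumr_ge0 => z _; apply: mulr_ge0.
Qed.

Lemma Ppow1 x y : Ppow P 1 x y = P x y.
Proof.
rewrite /= (bigD1 x) //= eqxx mul1r big1 ?addr0 // => z ne_zx.
by rewrite eq_sym (negbTE ne_zx) mul0r.
Qed.

Lemma PpowD a b x z : Ppow P (a + b) x z = \sum_y Ppow P a x y * Ppow P b y z.
Proof.
elim: b z => [|b IHb] z /=.
  rewrite addn0 (bigD1 z) //= eqxx mulr1 big1 ?addr0 // => y ne_yz.
  by rewrite (negbTE ne_yz) mulr0.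
rewrite addnS /=; under eq_bigr do rewrite IHb mulr_suml.
rewrite exchange_big; apply: eq_bigr => y _.
by rewrite mulr_sumr; apply: eq_bigr => y' _; rewrite mulrA.
Qed.

(* When [Ppow P (2 * h) x x' = 0] the division in [bridge] returns 0; both
   sides then vanish, since the terms of the Chapman-Kolmogorov sum for that
   entry are nonnegative. *)
Lemma Ppow_mul_bridge h x y x' :
  Ppow P (2 * h) x x' * bridge P h x y x' = Ppow P h x y * Ppow P h y x'.
Proof.
have [P2h0|P2h_neq0] := eqVneq (Ppow P (2 * h) x x') 0; last first.
  by rewrite /bridge mulrC divfK.
have sum_ge0 z : true -> 0 <= Ppow P h x z * Ppow P h z x'.
  by move=> _; apply: mulr_ge0; apply: Ppow_ge0.
rewrite P2h0 mul0r (psumr_eq0P sum_ge0) //.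
by rewrite -PpowD addnn -mul2n.
Qed.

Lemma Ppow_mul_sum_bridge h x x' :
  Ppow P (2 * h) x x' * \sum_y bridge P h x y x' = Ppow P (2 * h) x x'.
Proof.
rewrite mulr_sumr; under eq_bigr do rewrite Ppow_mul_bridge.
by rewrite -PpowD addnn -mul2n.
Qed.

Fixpoint pathwn (d : nat) (s : seq V) : R :=
  if s is x :: ((x' :: _) as s') then Ppow P d x x' * pathwn d s' else 1.

Lemma pathwn_cons2 d x x' s :
  pathwn d (x :: x' :: s) = Ppow P d x x' * pathwn d (x' :: s).
Proof. by []. Qed.

Lemma bweight_cons2 h x x' s y ys :
  bweight P h (x :: x' :: s) (y :: ys) =
  bridge P h x y x' * bweight P h (x' :: s) ys.
Proof. by []. Qed.

Lemma pathwn1 s : pathwn 1 s = pathw P s.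
Proof.
elim: s => [|x [|x' s] IHs] //.
by rewrite pathwn_cons2 Ppow1 IHs.
Qed.

Lemma pathwn_refine h v zs : size zs = (size v).-1 ->
  pathwn (2 * h) v * bweight P h v zs = pathwn h (refine v zs).
Proof.
elim: v zs => [|x [|x' v] IHv] [|z zs] //; rewrite ?mulr1 // => -[sz_zs].
have [r def_r] := refine_cons x' v zs.
rewrite pathwn_cons2 bweight_cons2 refine_cons2 def_r !pathwn_cons2 -def_r.
by rewrite -IHv // mulrACA Ppow_mul_bridge -!mulrA.
Qed.

Lemma pathwn_sum_cons2 h x x' v n (G : V -> seq V -> R) :
  pathwn (2 * h) (x :: x' :: v) *
    \sum_y sumseq n (fun zs => bridge P h x y x' * G y zs) =
  Ppow P (2 * h) x x' *
    \sum_y bridge P h x y x' * (pathwn (2 * h) (x' :: v) * sumseq n (G y)).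
Proof.
rewrite pathwn_cons2 -mulrA; congr (_ * _).
rewrite mulr_sumr; apply: eq_bigr => y _.
by rewrite !mulr_sumseqr; apply: eq_sumseq => zs _; rewrite mulrCA.
Qed.

Lemma pathwn_sum_bweight h v :
  pathwn (2 * h) v * sumseq (size v).-1 (bweight P h v) = pathwn (2 * h) v.
Proof.
elim: v => [|x [|x' v] IHv]; rewrite ?mulr1 //.
rewrite -[sumseq _ _]/(\sum_y sumseq (size v)
  (fun zs => bridge P h x y x' * bweight P h (x' :: v) zs)).
rewrite pathwn_sum_cons2; under eq_bigr do rewrite IHv.
by rewrite -mulr_suml mulrA Ppow_mul_sum_bridge.
Qed.

Lemma pathwn_sum_bweight_take h v j (F : seq V -> R) : (0 < j <= size v)%N ->
  pathwn (2 * h) v *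
    sumseq (size v).-1 (fun zs => bweight P h v zs * F (take j.-1 zs)) =
  pathwn (2 * h) v * sumseq j.-1 (fun ys => bweight P h (take j v) ys * F ys).
Proof.
elim: v j F => [|x v IHv] [|[|j]] F // le_jv.
  rewrite (@eq_sumseq _ _ _ _ (fun zs => bweight P h (x :: v) zs * F [::])).
    by rewrite -mulr_sumseql mulrA pathwn_sum_bweight /= take0 mul1r.
  by move=> zs _; rewrite take0.
case: v IHv le_jv => [//|x' v] IHv le_jv.
rewrite -[sumseq (size _).-1 _]/(\sum_y sumseq (size v) (fun zs =>
  bweight P h [:: x, x' & v] (y :: zs) * F (y :: take j zs))).
rewrite -[sumseq j.+1 _]/(\sum_y sumseq j (fun ys =>
  bweight P h [:: x, x' & take j v] (y :: ys) * F (y :: ys))).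
under eq_bigr => y _ do under eq_sumseq => zs _ do rewrite bweight_cons2 -mulrA.
under [in RHS]eq_bigr => y _ do under eq_sumseq => ys _ do
  rewrite bweight_cons2 -mulrA.
rewrite !pathwn_sum_cons2; congr (_ * _); apply: eq_bigr => y _; congr (_ * _).
exact: (IHv j.+1 (fun ys => F (y :: ys))).
Qed.

Lemma pathwn_refine_trunc rho h v j s : (0 < j <= size v)%N ->
  j = size v \/ (rho <= ndistinct (take j v))%N ->
  pathwn (2 * h) v * sumseq j.-1 (fun ys =>
    bweight P h (take j v) ys * (trunc rho (refine (take j v) ys) == s)%:R) =
  sumseq (size v).-1 (fun zs =>
    pathwn h (refine v zs) * (trunc rho (refine v zs) == s)%:R).
Proof.
move=> le_jv hit.
rewrite -(@pathwn_sum_bweight_take h v j (fun ys =>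
  (trunc rho (refine (take j v) ys) == s)%:R) le_jv) mulr_sumseqr.
by apply: eq_sumseq => zs sz_zs; rewrite mulrA pathwn_refine ?trunc_refine_take.
Qed.

Definition skeleton_dist L rho w0 k s : R :=
  sumseq (2 ^ k) (fun c =>
    pathwn (2 ^ (L - k)) (w0 :: c) * (level_trunc rho k (w0 :: c) == s)%:R).

Lemma Wdist0 L rho w0 s : Wdist P L rho w0 0 s = skeleton_dist L rho w0 0 s.
Proof.
rewrite /skeleton_dist expn0 subn0 /=.
case: s => [|a [|b [|c s]]] /=;
  try by rewrite big1 // => x _; rewrite ?eqseq_cons /= ?andbF mulr0.
rewrite (bigD1 b) //= big1 => [|x ne_xb]; last first.
  by rewrite !eqseq_cons (negbTE ne_xb) andbF mulr0.
by rewrite !eqseq_cons eqxx eq_sym mulr1 andbT addr0 mulrC.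
Qed.

Lemma Wdist_skeleton L rho w0 k : (k <= L)%N ->
  Wdist P L rho w0 k =1 skeleton_dist L rho w0 k.
Proof.
elim: k => [_|k IHk lt_kL] s; first exact: Wdist0.
set h := (2 ^ (L - k.+1))%N.
have mesh_k : (2 ^ (L - k) = 2 * h)%N by rewrite /h -expnS subnSK.
pose G n t := sumseq n.-1 (fun ys =>
  bweight P h t ys * (trunc rho (refine t ys) == s)%:R).
transitivity (\sum_(n < (2 ^ L).+2) \sum_(t : n.-tuple V)
  sumseq (2 ^ k) (fun c => (level_trunc rho k (w0 :: c) == t)%:R *
    (pathwn (2 * h) (w0 :: c) * G n t))).
  rewrite [LHS]/= -/h; apply: eq_bigr => n _; apply: eq_bigr => t _.
  rewrite (IHk (ltnW lt_kL)) /skeleton_dist mulr_sumseql mesh_k.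
  rewrite (big_tuple_sumseq _ (fun ys =>
    bweight P h t ys * (trunc rho (refine t ys) == s)%:R)).
  by apply: eq_sumseq => c _; rewrite mulrCA mulrA.
under eq_bigr do rewrite exchange_big_sumseq; rewrite exchange_big_sumseq.
have refineE := sumseq_refine (2 ^ k) w0 (fun v =>
  pathwn h v * (level_trunc rho k.+1 v == s)%:R).
cbv beta in refineE; rewrite /skeleton_dist -/h expnS [in RHS]mul2n refineE.
apply: eq_sumseq => c sz_c.
have [take_u /andP[u_gt0 le_uv] full_or_hit] :=
  @level_truncP _ rho k (w0 :: c) isT.
set u := level_trunc rho k (w0 :: c) in take_u u_gt0 le_uv full_or_hit *.
have lt_u_bound : (size u < (2 ^ L).+2)%N.
  by rewrite ltnS (leq_trans le_uv) //= sz_c ltnS leq_pexp2l // ltnW.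
rewrite (big_tuple_eq (fun n t => pathwn (2 * h) (w0 :: c) * G n t) lt_u_bound).
rewrite /G -{2 3}take_u pathwn_refine_trunc ?u_gt0 ?take_u //.
by rewrite -[(size (w0 :: c)).-1]/(size c) sz_c.
Qed.

End Skeleton.

Theorem mainTheorem6 (R : realFieldType) (V : finType) (P : V -> V -> R)
  (L rho : nat) (w0 : V) :
  stochastic P -> (1 <= rho)%N -> ((0 < L)%N || (1 < rho)%N) ->
  forall s : seq V, Wdist P L rho w0 L s = stopped_dist P L rho w0 s.
Proof.
move=> [P_ge0 _] _ L_rho s.
rewrite Wdist_skeleton // /skeleton_dist subnn expn0 /stopped_dist.
rewrite (big_tuple_sumseq _ (fun c =>
  pathw P (w0 :: c) * (take (tau L rho (w0 :: c)).+1 (w0 :: c) == s)%:R)).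
by apply: eq_sumseq => c sz_c; rewrite pathwn1 level_trunc_tau.
Qed.
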